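(* Let $r\ge1$ and $n\ge 1$ be integers, and let $I_1\subseteq\mathbb{F}_3^r$ be the set of all vectors whose entries lie in $\{0,1\}$ and which have exactly $k$ entries equal to $1$ for some $k\in[n,2n-1]$. Then for any pairwise distinct $A,B,C\in I_1$ and any $\alpha,\beta,\gamma\in\{1,2\}$, \[\alpha A\oplus\beta B\oplus\gamma C\neq 0.\]
   Context: Vectors in $\mathbb{F}_3^r$ are identified with $r$-trit ternary strings; $\oplus$ is componentwise addition modulo $3$ and $\alpha A$ is componentwise scalar multiplication modulo $3$. *)

From mathcomp Require Import all_boot all_order all_algebra.
Set Implicit Arguments. Unset Strict Implicit. Unset Printing Implicit Defensive.
Import GRing.Theory.
Local Open Scope ring_scope.

Definition ones_count (r : nat) (v : 'rV['F_3]_r) : nat :=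
  #|[set i : 'I_r | v 0 i == 1]|.

Definition in_I1 (r n : nat) (v : 'rV['F_3]_r) : Prop :=
  (forall i : 'I_r, v 0 i = 0 \/ v 0 i = 1) /\
  exists k : nat, (n <= k <= 2 * n - 1)%N /\ ones_count v = k.

From mathcomp Require Import all_boot all_order all_algebra.
From mathcomp Require Import zify.
Set Implicit Arguments. Unset Strict Implicit. Unset Printing Implicit Defensive.
Import GRing.Theory.
Local Open Scope ring_scope.

(* Dividing by alpha, the relation becomes A + b B + c C = 0 with b, c = +-1.
   If b = c = 1, then A + B + C = 0, which for 0/1 vectors forces A = B.
   Otherwise one of A, B, C is the sum of the other two; for 0/1 vectors the
   two summands then have disjoint supports, so the sum has at least 2n ones,
   too many for I_1. *)

Definition binary_row {r : nat} (v : 'rV['F_3]_r) : Prop :=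
  forall i, v 0 i = 0 \/ v 0 i = 1.

Lemma F3_neq0_pm1 (x : 'F_3) : x != 0 -> x = 1 \/ x = -1.
Proof. by case: x => -[|[|[|]]] //= ? _; [left | right]; apply/val_inj. Qed.

Section BinaryRows.

Variable r : nat.
Implicit Types A B C : 'rV['F_3]_r.

Lemma binary_row_add3_eq0 A B C :
  binary_row A -> binary_row B -> binary_row C -> A + B + C = 0 -> A = B.
Proof.
move=> hA hB hC /rowP ABC; apply/rowP => i; have := ABC i; rewrite !mxE.
by case: (hA i) (hB i) (hC i) => -> [] -> [] -> /eqP.
Qed.

Lemma ones_count_add A B :
  binary_row A -> binary_row B -> binary_row (A + B) ->
  ones_count (A + B) = (ones_count A + ones_count B)%N.
Proof.
move=> hA hB hAB; rewrite /ones_count -cardsUI.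
have -> : [set i | (A + B) 0 i == 1] =
          [set i | A 0 i == 1] :|: [set i | B 0 i == 1].
  apply/setP => i; rewrite !inE; have := hAB i; rewrite !mxE.
  by case: (hA i) (hB i) => -> [] -> [].
suff -> : [set i | A 0 i == 1] :&: [set i | B 0 i == 1] = set0.
  by rewrite cards0 addn0.
apply/setP => i; rewrite !inE; have := hAB i; rewrite !mxE.
by case: (hA i) (hB i) => -> [] -> [].
Qed.

Lemma in_I1_add_notin n A B :
  (0 < n)%N -> in_I1 n A -> in_I1 n B -> ~ in_I1 n (A + B).
Proof.
move=> n_gt0 [hA [a [/andP [a_ge _] a_eq]]] [hB [b [/andP [b_ge _] b_eq]]].
move=> [hAB [c [/andP [_ c_le] c_eq]]].
move: c_eq; rewrite ones_count_add // a_eq b_eq; lia.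
Qed.

End BinaryRows.

Theorem theorem4p2 (r n : nat) (hr : (1 <= r)%N) (hn : (1 <= n)%N)
  (A B C : 'rV['F_3]_r)
  (hA : in_I1 n A) (hB : in_I1 n B) (hC : in_I1 n C)
  (hAB : A <> B) (hAC : A <> C) (hBC : B <> C)
  (alpha beta gamma : 'F_3)
  (ha : alpha = 1 \/ alpha = 2) (hb : beta = 1 \/ beta = 2) (hc : gamma = 1 \/ gamma = 2) :
  alpha *: A + beta *: B + gamma *: C <> 0.
Proof.
have nz x : x = 1 \/ x = 2 -> x != 0 :> 'F_3 by case=> ->.
have ratio_pm1 x : x = 1 \/ x = 2 -> x / alpha = 1 \/ x / alpha = -1.
  by move=> hx; apply/F3_neq0_pm1/mulf_neq0; [exact: nz | exact/invr_neq0/nz].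
move=> E.
have {}E : A + (beta / alpha) *: B + (gamma / alpha) *: C = 0.
  rewrite -(scaler0 _ alpha^-1) -E !scalerDr !scalerA !(mulrC _ alpha^-1).
  by rewrite mulVf ?nz // scale1r.
case: (ratio_pm1 _ hb) (ratio_pm1 _ hc) => [-> [] -> | -> [] ->] in E;
  rewrite ?scale1r ?scaleN1r in E.
- exact: hAB (binary_row_add3_eq0 hA.1 hB.1 hC.1 E).
- by apply: (in_I1_add_notin hn hA hB); move/subr0_eq: E => ->.
- by apply: (in_I1_add_notin hn hA hC); rewrite addrAC in E; move/subr0_eq: E => ->.
- by apply: (in_I1_add_notin hn hB hC); rewrite -addrA -opprD in E; move/subr0_eq: E => <-.
Qed.
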